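(* Let $n\ge 2$, $\mathbf A\in\mathcal G_n$, and let \[T=\{(u,V)\in\mathcal D(U(\mathbf A),\mathbf 2)\times\mathcal P(\{0,\dots,n-1\}) : 0,n-1\in V \text{ and } |{\uparrow}u|+1=|V|\}.\] Define $\iota_{\mathbf A}\colon\mathcal G_n(\mathbf A,\mathbf C_n)\to T$ by $\iota_{\mathbf A}(x)=(\omega\circ x,\operatorname{ran}x)$, and define $\gamma_{\mathbf A}$ on $T$ as follows: if $(u,V)\in T$ and $V=\{i_0,i_1,\dots,i_m\}$ with $0=i_0<i_1<\dots<i_m=n-1$, then for $a\in A$, $\gamma_{\mathbf A}(u,V)(a)=i_k$ where $k=|\{v\in{\uparrow}u: v(a)=1\}|$. Then $\iota_{\mathbf A}$ is a well-defined map into $T$, $\gamma_{\mathbf A}$ is a well-defined map from $T$ into $\mathcal G_n(\mathbf A,\mathbf C_n)$, and $\iota_{\mathbf A}$ and $\gamma_{\mathbf A}$ are mutually inverse bijections. In particular, the map $x\mapsto\omega\circ x$ is a surjection from $\mathcal G_n(\mathbf A,\mathbf C_n)$ onto $\mathcal D(U(\mathbf A),\mathbf 2)$.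
   Context: Fix an integer $n\ge 2$. $\mathbf C_n$ is the Heyting algebra whose universe is the chain $\{0<1<\dots<n-1\}$, with lattice operations min and max, $\bot=0$, $\top=n-1$, and $a\to b=\top$ if $a\le b$, $a\to b=b$ if $b<a$. $\mathcal G_n$ denotes the class of algebras isomorphic to subalgebras of direct powers of $\mathbf C_n$. For $\mathbf A\in\mathcal G_n$, $\mathcal G_n(\mathbf A,\mathbf C_n)$ is the set of Heyting algebra homomorphisms $\mathbf A\to\mathbf C_n$, and $\operatorname{ran}x$ is the image of $x$. $U(\mathbf A)$ is the bounded distributive lattice reduct of $\mathbf A$; $\mathbf 2$ is the two-element bounded lattice; $\mathcal D(U(\mathbf A),\mathbf 2)$ is the set of bounded-lattice homomorphisms $U(\mathbf A)\to\mathbf 2$, ordered pointwise, and ${\uparrow}u$ is the set of elements $\ge u$. $\omega\colon U(\mathbf C_n)\to\mathbf 2$ is the lattice homomorphism with $\omega(\top)=1$ and $\omega(k)=0$ for $k<\top$. $\mathcal P(\{0,\dots,n-1\})$ is the power set of $\{0,\dots,n-1\}$. *)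

From HB Require Import structures.
From mathcomp Require Import all_boot all_order.
From Stdlib Require Import ClassicalEpsilon.
Set Implicit Arguments. Unset Strict Implicit. Unset Printing Implicit Defensive.

Record halg := HAlg {
  car :> Type;
  hmeet : car -> car -> car;
  hjoin : car -> car -> car;
  himp  : car -> car -> car;
  hbot  : car;
  htop  : car }.

(* The chain C_n on 'I_n = {0,...,n-1}; a map x : A -> 'I_n is a Heyting
   algebra homomorphism A -> C_n (operations of C_n written on values). *)
Definition is_hom (n : nat) (A : halg) (x : A -> 'I_n) : Prop :=
  [/\ forall a b, val (x (hmeet a b)) = minn (x a) (x b),
      forall a b, val (x (hjoin a b)) = maxn (x a) (x b),
      forall a b, val (x (himp a b)) = (if (x a <= x b)%N then n.-1 else val (x b)),
      val (x (hbot A)) = 0%N &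
      val (x (htop A)) = n.-1].

(* A \in G_n: A is isomorphic to a subalgebra of a direct power C_n^I, i.e.
   there is an injective map A -> ('I -> 'I_n) all of whose coordinates are
   homomorphisms (= operations computed pointwise). *)
Definition in_Gn (n : nat) (A : halg) : Prop :=
  exists (I : Type) (e : A -> I -> 'I_n),
    injective e /\ forall i, @is_hom n A (fun a => e a i).

Definition is_lhom (A : halg) (u : A -> bool) : Prop :=
  [/\ forall a b, u (hmeet a b) = u a && u b,
      forall a b, u (hjoin a b) = u a || u b,
      u (hbot A) = false &
      u (htop A) = true].

Definition le2 (A : halg) (u v : A -> bool) : Prop := forall a, u a -> v a.
Definition upset (A : halg) (u : A -> bool) (v : A -> bool) : Prop :=
  is_lhom v /\ le2 u v.

Definition card_eq (X : Type) (P : X -> Prop) (k : nat) : Prop :=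
  exists f : 'I_k -> X, injective f /\ forall y, P y <-> exists i, f i = y.

Definition ncard (X : Type) (P : X -> Prop) : nat :=
  epsilon (inhabits 0%N) (fun k => card_eq P k).

Definition asbool (P : Prop) : bool :=
  if excluded_middle_informative P then true else false.

Definition omega (n : nat) (i : 'I_n) : bool := val i == n.-1.

Definition ran (n : nat) (A : halg) (x : A -> 'I_n) : {set 'I_n} :=
  [set i | asbool (exists a, x a = i)].

Definition inT (n : nat) (A : halg) (p : (A -> bool) * {set 'I_n}) : Prop :=
  let: (u, V) := p in
  [/\ is_lhom u,
      exists2 i, i \in V & val i = 0%N,
      exists2 i, i \in V & val i = n.-1 &
      exists k, card_eq (upset u) k /\ k.+1 = #|V| ].

Definition iota_map (n : nat) (A : halg) (x : A -> 'I_n) : (A -> bool) * {set 'I_n} :=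
  (fun a => omega (x a), ran x).

(* gamma_map(u,V)(a) = i_k, with V = {i_0 < ... < i_m} and
   k = |{v in up u : v a = 1}|; d is an irrelevant default for nth. *)
Definition gamma_map (n : nat) (d : 'I_n) (A : halg) (p : (A -> bool) * {set 'I_n})
  : A -> 'I_n :=
  let: (u, V) := p in
  fun a => nth d (sort (fun i j : 'I_n => (i <= j)%N) (enum V))
               (ncard (fun v => upset u v /\ v a = true)).

From mathcomp Require Import all_boot all_order.
From mathcomp Require Import zify.
From Stdlib Require Import ClassicalEpsilon FunctionalExtensionality Classical.
Set Implicit Arguments. Unset Strict Implicit. Unset Printing Implicit Defensive.

(* As A is in G_n, homomorphisms A -> C_n separate its points, so identities of
   the chain C_n hold in A.  Hence, for a lattice homomorphism u : U(A) -> 2,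
   the lattice homomorphisms above u form a chain f_0, ..., f_(k-1) (by
   prelinearity), and the count a |-> #{i | f_i a = 1} sends meets and joins
   to min and max and a -> b to k or to the count of b; it takes every value
   t <= k, and k < n since in C_n one of n consecutive implications is the top.
   Composing the count with the increasing enumeration of V gives gamma, and
   iota o gamma = id.  Conversely the homomorphisms above omega o x are the
   thresholds a |-> (j <= x a), j a nonzero value of x; this gives iota x in T
   and gamma o iota = id.  Surjectivity of x |-> omega o x is gamma applied to
   (u, {0, ..., k-1, n-1}). *)

Lemma card_eq_iff (X : Type) (P Q : X -> Prop) k :
  (forall y, P y <-> Q y) -> card_eq P k -> card_eq Q k.
Proof. by move=> PQ [f [f_inj f_P]]; exists f; split=> // y; rewrite -PQ. Qed.

Lemma card_eq_leq (X : Type) (P : X -> Prop) k1 k2 :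
  card_eq P k1 -> card_eq P k2 -> k1 <= k2.
Proof.
move=> [f [f_inj f_P]] [g [g_inj g_P]].
have g_onto i : exists j, g j = f i by apply/g_P/f_P; exists i.
pose h i := proj1_sig (constructive_indefinite_description _ (g_onto i)).
have hK i : g (h i) = f i by rewrite /h; case: constructive_indefinite_description.
have h_inj : injective h by move=> i j hij; apply: f_inj; rewrite -!hK hij.
by have := leq_card h h_inj; rewrite !card_ord.
Qed.

Lemma ncard_eq (X : Type) (P : X -> Prop) k : card_eq P k -> ncard P = k.
Proof.
move=> Pk; have := epsilon_spec (inhabits 0) (fun k => card_eq P k) (ex_intro _ k Pk).
rewrite -/(ncard P) => Pn; apply/eqP; rewrite eqn_leq.
by rewrite (card_eq_leq Pn Pk) (card_eq_leq Pk Pn).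
Qed.

Lemma card_eq_filter (X : Type) (P : X -> Prop) k (f : 'I_k -> X) (Q : X -> bool) :
  injective f -> (forall y, P y <-> exists i, f i = y) ->
  card_eq (fun y => P y /\ Q y) #|[set i | Q (f i)]|.
Proof.
move=> f_inj f_P; exists (fun j => f (enum_val j)); split.
  by move=> i j /f_inj /enum_val_inj.
move=> y; split.
  move=> [/f_P [i <-] Qfi]; have Ii : i \in [set i | Q (f i)] by rewrite inE.
  by exists (enum_rank_in Ii i); rewrite enum_rankK_in.
move=> [j <-]; split; first by apply/f_P; exists (enum_val j).
by have := enum_valP j; rewrite inE.
Qed.

Lemma card_eq_imset (I : finType) (X : Type) (g : I -> X) (Z : {set I}) :
  {in Z &, injective g} -> card_eq (fun y => exists2 j, j \in Z & y = g j) #|Z|.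
Proof.
move=> g_inj; exists (fun t => g (enum_val t)); split.
  by move=> s t /g_inj gst; apply: enum_val_inj; apply: gst; apply: enum_valP.
move=> y; split; last by move=> [t <-]; exists (enum_val t) => //; apply: enum_valP.
by move=> [j jZ ->]; exists (enum_rank_in jZ j); rewrite enum_rankK_in.
Qed.

Lemma asboolP (P : Prop) : reflect P (asbool P).
Proof. by rewrite /asbool; case: excluded_middle_informative => h; constructor. Qed.

Definition ascending n (V : {set 'I_n}) : seq 'I_n :=
  sort (fun i j : 'I_n => (i <= j)%N) (enum V).

Section Ascending.
Variables (n : nat) (V : {set 'I_n}) (d : 'I_n).
Local Notation s := (ascending V).

Lemma size_ascending : size s = #|V|.
Proof. by rewrite size_sort cardE. Qed.

Lemma mem_ascending j : (j \in s) = (j \in V).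
Proof. by rewrite mem_sort mem_enum. Qed.

Lemma ascending_mem i : i < #|V| -> nth d s i \in V.
Proof. by move=> iV; rewrite -mem_ascending mem_nth // size_ascending. Qed.

Lemma ascending_onto j : j \in V -> exists2 i, i < #|V| & nth d s i = j.
Proof.
move=> jV; exists (index j s); last by rewrite nth_index ?mem_ascending.
by rewrite -size_ascending index_mem mem_ascending.
Qed.

Lemma ascending_leq i j : i < #|V| -> j < #|V| -> (nth d s i <= nth d s j) = (i <= j).
Proof.
have s_lt : sorted (fun i j : 'I_n => i < j) s.
  suff : sorted ltn [seq val i | i <- s] by rewrite sorted_map.
  rewrite ltn_sorted_uniq_leq map_inj_uniq ?sort_uniq ?enum_uniq //=; last exact: val_inj.
  rewrite sorted_map.
  by apply: sort_sorted => x y; apply: leq_total.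
have := sorted_ltn_nth (fun _ _ _ => @ltn_trans _ _ _) d s_lt.
rewrite size_ascending => s_homo iV jV.
exact: (leq_mono_in (D := [pred i | i < #|V|]) (f := fun i => nat_of_ord (nth d s i)) s_homo).
Qed.

Lemma ascending_inj i j : i < #|V| -> j < #|V| -> nth d s i = nth d s j -> i = j.
Proof.
move=> iV jV sij; apply/eqP; rewrite eqn_leq.
by rewrite -(ascending_leq iV jV) -(ascending_leq jV iV) sij !leqnn.
Qed.

Lemma ascending_min i j : i < #|V| -> j < #|V| ->
  nth d s (minn i j) = minn (nth d s i) (nth d s j) :> nat.
Proof.
move=> iV jV; have := ascending_leq iV jV; have := ascending_leq jV iV.
by case: (leqP i j) => ij; rewrite ?(minn_idPl (ltnW ij)) ?(minn_idPr (ltnW ij)); lia.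
Qed.

Lemma ascending_max i j : i < #|V| -> j < #|V| ->
  nth d s (maxn i j) = maxn (nth d s i) (nth d s j) :> nat.
Proof.
move=> iV jV; have := ascending_leq iV jV; have := ascending_leq jV iV.
by case: (leqP i j) => ij; rewrite ?(maxn_idPr ij) ?(maxn_idPl (ltnW ij)); lia.
Qed.

Lemma ascending_first : (exists2 j, j \in V & val j = 0) -> val (nth d s 0) = 0.
Proof.
move=> [j jV /= j0]; have [i iV ei] := ascending_onto jV.
by have := ascending_leq (leq_ltn_trans (leq0n i) iV) iV; rewrite ei leq0n /=; lia.
Qed.

Lemma ascending_last : (exists2 j, j \in V & val j = n.-1) ->
  val (nth d s #|V|.-1) = n.-1.
Proof.
move=> [j jV /= jtop]; have [i iV ei] := ascending_onto jV.
have lastV : #|V|.-1 < #|V| by lia.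
have i_last : i <= #|V|.-1 by lia.
have := ascending_leq iV lastV; have := ltn_ord (nth d s #|V|.-1).
by rewrite ei i_last /=; lia.
Qed.

Lemma ascending_rank j : d \in V -> val d = 0 -> j \in V ->
  nth d s #|[set i in V :\ d | i <= j]| = j.
Proof.
move=> dV /= d0 jV; have [m mV <-] := ascending_onto jV.
have s0 : nth d s 0 = 0 :> nat by apply: ascending_first; exists d.
pose next (l : 'I_m) := nth d s l.+1.
have nextV (l : 'I_m) : l.+1 < #|V| by have := ltn_ord l; lia.
have next_inj : injective next.
  by move=> l1 l2 e; apply: val_inj; case: (ascending_inj (nextV l1) (nextV l2) e).
suff -> : [set i in V :\ d | i <= nth d s m] = next @: setT.
  by rewrite card_imset // cardsT card_ord.
apply/setP => i; rewrite in_set in_setD1; apply/idP/imsetP.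
  move=> /andP [/andP [id iV] im]; have [[|l] lV el] := ascending_onto iV.
    by move: id; rewrite -el; case/eqP; apply: val_inj; rewrite /= s0 d0.
  have lm : l < m by rewrite -(ascending_leq lV mV) el.
  by exists (Ordinal lm).
move=> [l _ ->]; rewrite /next ascending_mem // (ascending_leq (nextV l) mV) (ltn_ord l).
rewrite !andbT; apply/eqP => ed.
by have := ascending_leq (nextV l) (ltn_trans (ltn0Sn l) (nextV l)); rewrite ed s0 -d0; lia.
Qed.

End Ascending.

Definition separating n (A : halg) : Prop :=
  forall s t : A, (forall x : A -> 'I_n, is_hom x -> val (x s) = val (x t)) -> s = t.

Lemma in_Gn_separating n (A : halg) : in_Gn n A -> separating n A.
Proof.
move=> [I [e [e_inj e_hom]]] s t st; apply: e_inj.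
by apply: functional_extensionality => i; apply: val_inj; apply: (st _ (e_hom i)).
Qed.

Lemma is_homE n (A : halg) (x : A -> 'I_n) : is_hom x ->
  [/\ forall a b, nat_of_ord (x (hmeet a b)) = minn (x a) (x b),
      forall a b, nat_of_ord (x (hjoin a b)) = maxn (x a) (x b),
      forall a b, nat_of_ord (x (himp a b)) = if x a <= x b then n.-1 else nat_of_ord (x b),
      nat_of_ord (x (hbot A)) = 0 &
      nat_of_ord (x (htop A)) = n.-1].
Proof. by []. Qed.

Section HeytingIdentities.
Variables (n : nat) (A : halg).
Hypothesis sepA : separating n A.

(* Each identity holds in the chain C_n, hence in A by separation. *)
Lemma meet_imp (a b : A) : hmeet a (himp a b) = hmeet a b.
Proof.
apply: sepA => x /is_homE [xM _ xI _ _] /=; rewrite xM xM xI.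
by have := ltn_ord (x a); case: ifP; lia.
Qed.

Lemma meet_imp_r (a b : A) : hmeet b (himp a b) = b.
Proof.
apply: sepA => x /is_homE [xM _ xI _ _] /=; rewrite xM xI.
by have := ltn_ord (x b); case: ifP; lia.
Qed.

Lemma imp_prelinear (a b : A) : hjoin (himp a b) (himp b a) = htop A.
Proof.
apply: sepA => x /is_homE [_ xJ xI _ xT] /=; rewrite xJ !xI xT.
by have := ltn_ord (x a); have := ltn_ord (x b); do 2 case: ifP; lia.
Qed.

Lemma imp_meet (a b c : A) : himp a (hmeet b c) = hmeet (himp a b) (himp a c).
Proof.
apply: sepA => x /is_homE [xM _ xI _ _] /=; rewrite xM !xI xM.
by have := ltn_ord (x b); have := ltn_ord (x c); do 3 case: ifP; lia.
Qed.

Lemma imp_join (a b c : A) : himp a (hjoin b c) = hjoin (himp a b) (himp a c).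
Proof.
apply: sepA => x /is_homE [_ xJ xI _ _] /=; rewrite xJ !xI xJ.
by have := ltn_ord (x b); have := ltn_ord (x c); do 3 case: ifP; lia.
Qed.

Lemma imp_top (a : A) : himp a (htop A) = htop A.
Proof.
apply: sepA => x /is_homE [_ _ xI _ xT] /=; rewrite xI xT.
by case: ifP.
Qed.

Lemma imp_refl (a : A) : himp a a = htop A.
Proof. by apply: sepA => x /is_homE [_ _ xI _ xT] /=; rewrite xI xT leqnn. Qed.

Lemma meet_neg_imp (a b : A) : hmeet (himp a (hbot A)) (himp a b) = himp a (hbot A).
Proof.
apply: sepA => x /is_homE [xM _ xI xB _] /=; rewrite xM !xI xB.
by have := ltn_ord (x b); do 2 case: ifP; lia.
Qed.

(* In C_n a strictly decreasing chain of length n + 1 is impossible, so among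
   any n consecutive implications xs i -> xs i.+1 one evaluates to the top. *)
Lemma imp_steps_top (xs : nat -> A) :
  \big[@hjoin A/hbot A]_(i < n) himp (xs i) (xs i.+1) = htop A.
Proof.
apply: sepA => x /is_homE [_ xJ xI xB xT] /=; rewrite xT.
rewrite (big_morph (fun a => nat_of_ord (x a)) (id1 := 0) (op1 := maxn) xJ xB).
have [/existsP [i step_up] | /existsPn no_step_up] :=
  boolP [exists i : 'I_n, x (xs i) <= x (xs i.+1)]; last first.
  have step i : i < n -> x (xs i.+1) < x (xs i).
    by move=> ltin; have := no_step_up (Ordinal ltin); rewrite ltnNge.
  have descent i : i <= n -> x (xs i) + i <= x (xs 0).
    elim: i => [|i IHi] lein; first by rewrite addn0.
    by have := step i lein; have := IHi (ltnW lein); lia.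
  by have := descent n (leqnn n); have := ltn_ord (x (xs 0)); lia.
apply/eqP; rewrite eqn_leq; apply/andP; split.
  apply/bigmax_leqP => j _; rewrite xI; case: ifP => // _.
  by have := ltn_ord (x (xs j.+1)); lia.
have := @leq_bigmax _ (fun i : 'I_n => nat_of_ord (x (himp (xs i) (xs i.+1)))) i.
by rewrite /= xI step_up.
Qed.

End HeytingIdentities.

Section LatticeHoms.
Variables (n : nat) (A : halg).
Hypothesis sepA : separating n A.
Variable v : A -> bool.
Hypothesis v_hom : is_lhom v.

Lemma lhom_mp (a b : A) : v a -> v (himp a b) -> v b.
Proof.
have [vM _ _ _] := v_hom; move=> va vab.
by have := vM a (himp a b); rewrite (meet_imp sepA) vM va vab.
Qed.

Lemma lhom_imp (a b : A) : v b -> v (himp a b).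
Proof.
by have [vM _ _ _] := v_hom; move=> vb; have := vM b (himp a b); rewrite (meet_imp_r sepA) vb.
Qed.

Lemma lhom_prelinear (a b : A) : v (himp a b) || v (himp b a).
Proof. by have [_ vJ _ vT] := v_hom; rewrite -vJ (imp_prelinear sepA). Qed.

Lemma lhom_imp_refl (a : A) : v (himp a a).
Proof. by have [_ _ _ vT] := v_hom; rewrite (imp_refl sepA). Qed.

(* If a -> b fails under v, then c |-> v (a -> c) is a lattice homomorphism
   above v; it holds at a (by lhom_imp_refl) and still fails at b. *)
Lemma lhom_relativize (a b : A) : v (himp a b) = false -> upset v (fun c => v (himp a c)).
Proof.
have [vM vJ vB vT] := v_hom; move=> vab; split; last by move=> c; apply: lhom_imp.
split.
- by move=> c c'; rewrite (imp_meet sepA) vM.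
- by move=> c c'; rewrite (imp_join sepA) vJ.
- apply/negbTE/negP => va0; have := vM (himp a (hbot A)) (himp a b).
  by rewrite (meet_neg_imp sepA) va0 vab.
- by rewrite (imp_top sepA).
Qed.

End LatticeHoms.

(* The lattice homomorphisms above a fixed one form a chain: this is the
   prime-filter form of prelinearity. *)
Lemma upset_chain n (A : halg) (u v w : A -> bool) : separating n A -> is_lhom u ->
  upset u v -> upset u w -> le2 v w \/ le2 w v.
Proof.
move=> sepA u_hom [v_hom uv] [w_hom uw].
case: (classic (le2 v w)) => [|/not_all_ex_not [a vw_a]]; [by left | right].
have va : v a by case: (v a) vw_a => //; case: (w a).
have wa : w a = false by case: (w a) vw_a => //; case: (v a).
move=> b wb; case/orP: (lhom_prelinear sepA u_hom a b) => [/uv vab | /uw wba].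
  exact: (lhom_mp sepA v_hom va vab).
by have := lhom_mp sepA w_hom wb wba; rewrite wa.
Qed.

(* For a family f of lattice homomorphisms, the indices i with f i a = 1;
   its cardinality is the count used to define gamma. *)
Definition sat (A : halg) k (f : 'I_k -> A -> bool) (a : A) : {set 'I_k} := [set i | f i a].

Section Counting.
Variables (n : nat) (A : halg) (u : A -> bool) (k : nat) (f : 'I_k -> A -> bool).
Hypotheses (sepA : separating n A) (u_hom : is_lhom u).
Hypotheses (f_inj : injective f) (f_up : forall i, upset u (f i)).

(* Since the f i form a chain, the sets sat f a are nested. *)
Lemma sat_nested a b : sat f a \subset sat f b \/ sat f b \subset sat f a.
Proof.
case: (boolP (sat f a \subset sat f b)) => [|/subsetPn [i ia ib]]; [by left | right].
apply/subsetP => j jb; apply: contraT => ja; rewrite !inE in ia ib ja jb.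
case: (upset_chain sepA u_hom (f_up i) (f_up j)) => fij; first by rewrite (fij a ia) in ja.
by rewrite (fij b jb) in ib.
Qed.

Lemma card_sat_leq a b : (#|sat f a| <= #|sat f b|) = (sat f a \subset sat f b).
Proof.
case: (boolP (sat f a \subset sat f b)) => [|ab]; first exact: subset_leq_card.
case: (sat_nested a b) => ba; first by rewrite ba in ab.
by apply/negbTE; rewrite -ltnNge; apply: proper_card; rewrite properE ba.
Qed.

Lemma sat_meet a b : sat f (hmeet a b) = sat f a :&: sat f b.
Proof. by apply/setP => i; have [iM _ _ _] := (f_up i).1; rewrite !inE iM. Qed.

Lemma sat_join a b : sat f (hjoin a b) = sat f a :|: sat f b.
Proof. by apply/setP => i; have [_ iJ _ _] := (f_up i).1; rewrite !inE iJ. Qed.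

Lemma sat_bot : sat f (hbot A) = set0.
Proof. by apply/setP => i; have [_ _ iB _] := (f_up i).1; rewrite !inE iB. Qed.

Lemma sat_top : sat f (htop A) = setT.
Proof. by apply/setP => i; have [_ _ _ iT] := (f_up i).1; rewrite !inE iT. Qed.

Lemma card_sat_meet a b : #|sat f (hmeet a b)| = minn #|sat f a| #|sat f b|.
Proof.
rewrite sat_meet; case: (sat_nested a b) => sub.
  by rewrite (setIidPl sub); have := subset_leq_card sub; lia.
by rewrite (setIidPr sub); have := subset_leq_card sub; lia.
Qed.

Lemma card_sat_join a b : #|sat f (hjoin a b)| = maxn #|sat f a| #|sat f b|.
Proof.
rewrite sat_join; case: (sat_nested a b) => sub.
  by rewrite (setUidPr sub); have := subset_leq_card sub; lia.
by rewrite (setUidPl sub); have := subset_leq_card sub; lia.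
Qed.

Lemma sat_imp_strict a b : ~~ (sat f a \subset sat f b) -> sat f (himp a b) = sat f b.
Proof.
move=> /subsetPn [j ja jb]; rewrite !inE in ja jb.
apply/setP => i; rewrite !inE; have i_hom := (f_up i).1.
apply/idP/idP => [iab | ib]; last exact: (lhom_imp sepA i_hom).
apply: contraT => /negbTE ib.
have ia : f i a = false.
  by apply/negbTE/negP => ia; rewrite (lhom_mp sepA i_hom ia iab) in ib.
case: (upset_chain sepA u_hom (f_up i) (f_up j)) => [fij | fji].
  by rewrite (lhom_mp sepA (f_up j).1 ja (fij _ iab)) in jb.
by rewrite (fji a ja) in ia.
Qed.

(* The indices of the homomorphisms above f i; every such set is of the form
   sat f a, and their sizes are pairwise distinct because the f i form a chain. *)
Definition above (i : 'I_k) : {set 'I_k} := [set j | asbool (le2 (f i) (f j))].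

Lemma above_refl i : i \in above i.
Proof. by rewrite inE; apply/asboolP. Qed.

(* The meet of separating elements c_j (true at f i, false at f j) cuts out
   exactly the indices above i. *)
Lemma sat_above i : exists a, sat f a = above i.
Proof.
have separate j : j \notin above i -> exists c, f i c /\ f j c = false.
  rewrite inE => /asboolP /not_all_ex_not [c fc].
  by exists c; case: (f i c) fc; case: (f j c).
pose c j := epsilon (inhabits (htop A)) (fun c => f i c /\ f j c = false).
have cP j : j \notin above i -> f i (c j) /\ f j (c j) = false.
  move=> j_out; apply: (epsilon_spec (inhabits (htop A)) (fun c => f i c /\ f j c = false)).
  exact: separate.
exists (\big[@hmeet A/htop A]_(j in ~: above i) c j).
apply/setP => l; have [lM _ _ lT] := (f_up l).1.
rewrite [in LHS]inE (big_morph (f l) lM lT) big_andE; apply/forallP/idP.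
  move=> all_c; apply: contraT => l_out.
  by have := all_c l; rewrite inE l_out /= (cP l l_out).2.
rewrite inE => /asboolP il j; apply/implyP; rewrite inE => j_out.
exact: il _ (cP j j_out).1.
Qed.

Lemma above_proper i j : le2 (f i) (f j) -> i != j -> above j \proper above i.
Proof.
move=> fij ij; rewrite properE; apply/andP; split.
  apply/subsetP => l; rewrite !inE => /asboolP fjl.
  by apply/asboolP => a /fij; apply: fjl.
apply/subsetPn; exists i; first exact: above_refl.
rewrite inE; apply/negP => /asboolP fji; move/negP: ij; apply; apply/eqP; apply: f_inj.
by apply: functional_extensionality => a; apply/idP/idP; [apply: fij | apply: fji].
Qed.

Lemma card_above_inj : injective (fun i => #|above i|).
Proof.
move=> i j /= eq_card; apply/eqP; apply: contraT => ij.
have ji : j != i by rewrite eq_sym.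
case: (upset_chain sepA u_hom (f_up i) (f_up j)) => [fij | fji].
  by have := proper_card (above_proper fij ij); rewrite eq_card ltnn.
by have := proper_card (above_proper fji ji); rewrite eq_card ltnn.
Qed.

Lemma sat_realize t : t <= k -> exists a, #|sat f a| = t.
Proof.
case: t => [|t] tk; first by exists (hbot A); rewrite sat_bot cards0.
have above_pos i : 0 < #|above i| by apply/card_gt0P; exists i; apply: above_refl.
have above_lt i : #|above i|.-1 < k.
  by have := max_card (above i); rewrite card_ord; have := above_pos i; lia.
pose r i : 'I_k := Ordinal (above_lt i).
have r_inj : injective r.
  move=> i j /(congr1 val) /= eq_pred; apply: card_above_inj => /=.
  by rewrite -(prednK (above_pos i)) -(prednK (above_pos j)) eq_pred.
have /codomP [i /(congr1 val) /= ei] := inj_card_onto r_inj (leqnn _) (Ordinal tk).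
have [a ea] := sat_above i; exists a.
by rewrite ea ei (prednK (above_pos i)).
Qed.

(* A chain of lattice homomorphisms above u has at most n - 1 members: otherwise
   the elements realizing k, k - 1, ..., k - n contradict imp_steps_top. *)
Lemma length_bound : k < n.
Proof.
rewrite ltnNge; apply/negP => nk.
pose xs i := epsilon (inhabits (htop A)) (fun a => #|sat f a| = k - i).
have xsP i : #|sat f (xs i)| = k - i.
  apply: (epsilon_spec (inhabits (htop A)) (fun a => #|sat f a| = k - i)).
  by apply: sat_realize; apply: leq_subr.
have [uM uJ uB uT] := u_hom.
move: uT; rewrite -(imp_steps_top sepA xs) (big_morph u uJ uB) big_orE.
move=> /existsP [i step].
have full : sat f (himp (xs i) (xs i.+1)) = setT.
  by apply/setP => j; rewrite !inE; apply: (f_up j).2.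
have strict : ~~ (sat f (xs i) \subset sat f (xs i.+1)).
  by rewrite -card_sat_leq !xsP; have := ltn_ord i; lia.
have := xsP i.+1; rewrite -(sat_imp_strict strict) full cardsT card_ord.
by have := ltn_ord i; lia.
Qed.

Section ExactEnumeration.
Hypothesis f_onto : forall v, upset u v -> exists i, f i = v.

(* If every f i having a has b, all f i have a -> b: otherwise the
   relativization of a failing f i would be a missing member of the chain. *)
Lemma sat_imp_sub a b : sat f a \subset sat f b -> sat f (himp a b) = setT.
Proof.
move=> ab; apply/setP => i; rewrite !inE; apply: contraT => /negbTE fi_ab.
have [w_hom fi_w] := lhom_relativize sepA (f_up i).1 fi_ab.
have [j fj] := f_onto (conj w_hom (fun c uc => fi_w c ((f_up i).2 c uc))).
have ja : j \in sat f a by rewrite inE fj; apply: (lhom_imp_refl sepA (f_up i).1).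
by move/subsetP: ab => /(_ j ja); rewrite inE fj fi_ab.
Qed.

(* The count is maximal exactly at the elements of the filter u, as u itself
   is one of the f i. *)
Lemma card_sat_full a : (#|sat f a| == k) = u a.
Proof.
have [i0 fi0] := f_onto (conj u_hom (fun a ua => ua)).
case: (boolP (u a)) => ua.
  have -> : sat f a = setT by apply/setP => i; rewrite !inE; apply: (f_up i).2.
  by rewrite cardsT card_ord eqxx.
have : sat f a \subset [set~ i0].
  by apply/subsetP => i; rewrite !inE; apply: contraTneq => ->; rewrite fi0.
move/subset_leq_card; rewrite cardsC1 card_ord => sat_small.
by apply/negbTE/eqP => sat_full; have := ltn_ord i0; lia.
Qed.

End ExactEnumeration.
End Counting.

(* The lattice homomorphisms above u are finitely many: a maximal injective
   family of them (of length < n by length_bound) exhausts them. *)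
Lemma upset_enumerable n (A : halg) (u : A -> bool) :
  separating n A -> is_lhom u -> exists k, card_eq (upset u) k.
Proof.
move=> sepA u_hom.
pose listable k := asbool (exists f : 'I_k -> A -> bool, injective f /\ forall i, upset u (f i)).
have listable0 : listable 0 by apply/asboolP; exists (fun _ => u); split; case.
have listable_bound k : listable k -> k <= n.
  by move/asboolP => [f [f_inj f_up]]; apply: ltnW; apply: (length_bound sepA u_hom f_inj f_up).
case: (ex_maxnP (ex_intro _ 0 listable0) listable_bound) => k /asboolP [f [f_inj f_up]] k_max.
exists k, f; split => // v; split; last by move=> [i <-].
move=> uv; apply: NNPP => v_new.
pose g (i : 'I_k.+1) := if unlift ord_max i is Some j then f j else v.
suff : listable k.+1 by move/k_max; rewrite ltnn.
apply/asboolP; exists g; split; last by move=> i; rewrite /g; case: unlift.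
move=> i1 i2; rewrite /g.
case: (unliftP ord_max i1) => [j1 ->|->]; case: (unliftP ord_max i2) => [j2 ->|->] //.
- by move/f_inj ->.
- by move=> fv; case: v_new; exists j1.
- by move=> fv; case: v_new; exists j2.
Qed.

Lemma gamma_mapE n (A : halg) (d : 'I_n) (u : A -> bool) (V : {set 'I_n}) k
    (f : 'I_k -> A -> bool) :
  injective f -> (forall v, upset u v <-> exists i, f i = v) ->
  gamma_map d (u, V) = fun a => nth d (ascending V) #|sat f a|.
Proof.
move=> f_inj f_enum; apply: functional_extensionality => a.
rewrite /gamma_map -/(ascending V); congr nth; apply: ncard_eq.
exact: (card_eq_filter (fun v => v a) f_inj f_enum).
Qed.

Section Gamma.
Variables (n : nat) (A : halg) (d : 'I_n).
Hypothesis sepA : separating n A.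

Lemma gamma_is_hom (p : (A -> bool) * {set 'I_n}) : inT p -> is_hom (gamma_map d p).
Proof.
case: p => u V [u_hom V0 Vtop [k [[f [f_inj f_enum]] kV]]].
have f_up i : upset u (f i) by apply/f_enum; exists i.
have f_onto v : upset u v -> exists i, f i = v by move/f_enum.
have satV a : #|sat f a| < #|V|.
  by rewrite -kV ltnS; have := max_card (sat f a); rewrite card_ord.
have top_k : nth d (ascending V) k = n.-1 :> nat.
  by rewrite -(ascending_last d Vtop) -kV.
rewrite (gamma_mapE d V f_inj f_enum); split => [a b | a b | a b | |] /=.
- by rewrite (card_sat_meet sepA u_hom f_up) ascending_min.
- by rewrite (card_sat_join sepA u_hom f_up) ascending_max.
- rewrite (ascending_leq d (satV a) (satV b)) (card_sat_leq sepA u_hom f_up).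
  case: (boolP (sat f a \subset sat f b)) => ab.
    by rewrite (sat_imp_sub sepA f_up f_onto ab) cardsT card_ord.
  by rewrite (sat_imp_strict sepA u_hom f_up ab).
- by rewrite (sat_bot f_up) cards0 ascending_first.
- by rewrite (sat_top f_up) cardsT card_ord.
Qed.

(* omega o gamma (u, V) = u since the top of V is reached at count k, and
   ran gamma (u, V) = V since every count t <= k is realized. *)
Lemma iota_gamma (p : (A -> bool) * {set 'I_n}) : inT p -> iota_map (gamma_map d p) = p.
Proof.
case: p => u V [u_hom _ Vtop [k [[f [f_inj f_enum]] kV]]].
have f_up i : upset u (f i) by apply/f_enum; exists i.
have f_onto v : upset u v -> exists i, f i = v by move/f_enum.
have satV a : #|sat f a| < #|V|.
  by rewrite -kV ltnS; have := max_card (sat f a); rewrite card_ord.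
have k_in_V : k < #|V| by rewrite -kV.
rewrite (gamma_mapE d V f_inj f_enum) /iota_map; congr pair.
  apply: functional_extensionality => a.
  rewrite /omega -(card_sat_full u_hom f_up f_onto a).
  rewrite -(ascending_last d Vtop) -kV /=.
  apply/eqP/eqP => [top_a | ->] //.
  by apply: (ascending_inj (satV a) k_in_V); apply: val_inj; exact: top_a.
apply/setP => j; rewrite inE; apply/asboolP/idP => [[a <-] | jV].
  exact: ascending_mem.
have [i iV <-] := ascending_onto d jV.
have [a ea] : exists a, #|sat f a| = i.
  by apply: (sat_realize sepA u_hom f_inj f_up); rewrite -ltnS kV.
by exists a; rewrite ea.
Qed.

End Gamma.

Lemma ranP n (A : halg) (x : A -> 'I_n) j : reflect (exists a, x a = j) (j \in ran x).
Proof. by rewrite inE; apply: asboolP. Qed.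

Section Iota.
Variables (n : nat) (A : halg) (x : A -> 'I_n).
Hypotheses (n_gt1 : 1 < n) (sepA : separating n A) (x_hom : is_hom x).

Lemma omega_lhom : is_lhom (fun a => omega (x a)).
Proof.
have [xM xJ _ xB xT] := is_homE x_hom; rewrite /omega; split.
- move=> a b; rewrite /= xM; have := ltn_ord (x a); have := ltn_ord (x b).
  by do 3 case: eqP; lia.
- move=> a b; rewrite /= xJ; have := ltn_ord (x a); have := ltn_ord (x b).
  by do 3 case: eqP; lia.
- by rewrite /= xB; case: eqP; lia.
- by rewrite /= xT eqxx.
Qed.

(* The lattice homomorphisms above omega o x are the threshold maps
   a |-> (j <= x a) for the nonzero values j of x. *)
Definition threshold (j : 'I_n) : A -> bool := fun a => j <= x a.

Lemma threshold_inj : {in ran x &, injective threshold}.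
Proof.
move=> j1 j2 /ranP [a1 x_a1] /ranP [a2 x_a2] eq_thr; apply: val_inj => /=.
have := congr1 (fun v => v a1) eq_thr; have := congr1 (fun v => v a2) eq_thr.
rewrite /threshold x_a1 x_a2 !leqnn => j12 j21.
by apply/eqP; rewrite eqn_leq j12 -j21.
Qed.

(* A homomorphism v above omega o x is the threshold of the least value x b
   with v b = 1: if x b <= x a then omega (x (b -> a)) = 1, so v a = 1. *)
Lemma upset_omega (d : 'I_n) : val d = 0 ->
  forall v, upset (fun a => omega (x a)) v <-> exists2 j, j \in ran x :\ d & v = threshold j.
Proof.
have [xM xJ xI xB xT] := is_homE x_hom; move=> /= d0 v; split.
  move=> [v_hom omega_v]; have v_top : v (htop A) by case: v_hom.
  pose in_v i := asbool (exists2 b, v b & x b = i).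
  have in_v_top : in_v (x (htop A)) by apply/asboolP; exists (htop A).
  case: (arg_minnP (fun i : 'I_n => nat_of_ord i) in_v_top) => j /asboolP [b vb xb] j_min.
  have v_thr : v = threshold j.
    apply: functional_extensionality => a; rewrite /threshold; apply/idP/idP => [va | ja].
      by apply: j_min; apply/asboolP; exists a.
    apply: (lhom_mp sepA v_hom vb); apply: omega_v.
    by rewrite /omega /= xI xb ja.
  exists j => //; rewrite !inE; apply/andP; split; last by apply/asboolP; exists b.
  apply/eqP => jd; have [_ _ v_bot _] := v_hom.
  by move: v_bot; rewrite v_thr /threshold jd xB d0.
move=> [j]; rewrite !inE => /andP [jd _] ->; split.
  split => [a b | a b | |]; rewrite /threshold.
  - by rewrite xM leq_min.
  - by rewrite xJ leq_max.
  - by rewrite xB leqn0; apply: contraNF jd => /eqP j0; apply/eqP/val_inj; rewrite /= j0 d0.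
  - by rewrite xT; have := ltn_ord j; lia.
by move=> a; rewrite /omega /threshold => /eqP ->; have := ltn_ord j; lia.
Qed.

Lemma iota_inT : inT (iota_map x).
Proof.
have [_ _ _ xB xT] := is_homE x_hom.
have bot_ran : x (hbot A) \in ran x by apply/ranP; exists (hbot A).
split.
- exact: omega_lhom.
- by exists (x (hbot A)).
- by exists (x (htop A)); first by apply/ranP; exists (htop A).
exists #|ran x :\ x (hbot A)|; split; last by rewrite [in RHS](cardsD1 (x (hbot A))) bot_ran.
have sub : {subset ran x :\ x (hbot A) <= ran x} by move=> j /setD1P [].
apply: (card_eq_iff _ (card_eq_imset (sub_in2 sub threshold_inj))) => v.
by symmetry; apply: upset_omega.
Qed.

(* gamma (iota x) a counts the nonzero values j <= x a of x, which is the
   position of x a in the increasing enumeration of ran x. *)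
Lemma gamma_iota (d : 'I_n) : val d = 0 -> gamma_map d (iota_map x) = x.
Proof.
have [_ _ _ xB _] := is_homE x_hom; move=> d0.
have d_ran : d \in ran x by apply/ranP; exists (hbot A); apply: val_inj; rewrite /= xB d0.
apply: functional_extensionality => a; rewrite /gamma_map /iota_map -/(ascending (ran x)).
have xa_ran : x a \in ran x by apply/ranP; exists a.
rewrite -[RHS](ascending_rank d_ran d0 xa_ran); congr nth; apply: ncard_eq.
have sub : {subset [set j in ran x :\ d | j <= x a] <= ran x}.
  by move=> j; rewrite !inE => /andP [/andP [_ ->]].
apply: (card_eq_iff _ (card_eq_imset (sub_in2 sub threshold_inj))) => v.
split => [[j] | [/(upset_omega d0) [j jZ ->] ja]].
  rewrite inE => /andP [jZ ja] ->; split => //.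
  by apply/(upset_omega d0); exists j.
by exists j => //; rewrite inE jZ.
Qed.

End Iota.

(* Every lattice homomorphism u : U(A) -> 2 is omega o x for a homomorphism
   x : A -> C_n: with k the number of homomorphisms above u (k < n), gamma
   maps (u, {0, ..., k - 1, n - 1}) to such an x. *)
Lemma omega_onto n (A : halg) (d : 'I_n) (u : A -> bool) :
  val d = 0 -> separating n A -> is_lhom u ->
  exists x : A -> 'I_n, is_hom x /\ (fun a => omega (x a)) = u.
Proof.
move=> d0 sepA u_hom.
have [k [f [f_inj f_enum]]] := upset_enumerable sepA u_hom.
have f_up i : upset u (f i) by apply/f_enum; exists i.
have k_lt_n : k < n := length_bound sepA u_hom f_inj f_up.
have kn : k <= n := ltnW k_lt_n.
have [i0 _] : exists i, f i = u by apply/f_enum; split.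
have n_top : n.-1 < n by lia.
pose low := widen_ord kn @: [set: 'I_k].
pose V := Ordinal n_top |: low.
have top_new : Ordinal n_top \notin low.
  by apply/imsetP => -[i _ /(congr1 val) /=]; have := ltn_ord i; lia.
have VT : inT (u, V).
  split => //.
  - exists (widen_ord kn (Ordinal (leq_ltn_trans (leq0n i0) (ltn_ord i0)))) => //.
    by apply/setU1P; right; apply: imset_f.
  - by exists (Ordinal n_top); first exact: setU11.
  exists k; split; first by exists f.
  rewrite cardsU1 top_new card_imset ?cardsT ?card_ord //.
  by move=> i j /(congr1 val) eq_ij; apply: val_inj.
exists (gamma_map d (u, V)); split; first exact: gamma_is_hom.
by have := congr1 fst (iota_gamma d sepA VT).
Qed.

Theorem lemma2p2 (n : nat) (hn : (1 < n)%N) (A : halg) (hA : in_Gn n A) :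
  let d : 'I_n := Ordinal (ltnW hn) in
  [/\ (forall x : A -> 'I_n, @is_hom n A x -> @inT n A (iota_map x)),
      (forall p : (A -> bool) * {set 'I_n}, @inT n A p -> @is_hom n A (gamma_map d p)),
      (forall x : A -> 'I_n, @is_hom n A x -> gamma_map d (iota_map x) = x),
      (forall p : (A -> bool) * {set 'I_n}, @inT n A p -> iota_map (gamma_map d p) = p) &
      (forall u : A -> bool, is_lhom u ->
         exists x : A -> 'I_n, @is_hom n A x /\ (fun a => omega (x a)) = u)].
Proof.
move=> d; have d0 : val d = 0 by [].
have sepA := in_Gn_separating hA.
split.
- by move=> x x_hom; apply: iota_inT hn sepA x_hom.
- by move=> p; apply: gamma_is_hom.
- by move=> x x_hom; exact: (gamma_iota hn sepA x_hom d0).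
- by move=> p; apply: iota_gamma.
- by move=> u; apply: omega_onto d0 sepA.
Qed.
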